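(* Let $q > 2$ be an integer. A generalized quadrangle of order $(q, q^2-q)$ whose automorphism group acts transitively on its points does not possess an ovoid.
   Context: A generalized quadrangle of order $(s,t)$ consists of a set $P$ of points, a set $L$ of lines and an incidence relation such that every point lies on exactly $t+1$ lines, every line contains exactly $s+1$ points, and for every point $p$ and line $l$ not containing $p$ there is a unique point $p'$ on $l$ and a unique line $l'$ containing both $p$ and $p'$. Its point graph has vertex set $P$, two distinct points adjacent iff collinear. An ovoid is a Delsarte coclique of the point graph: a set of pairwise non-collinear points of size $\frac{ve^-}{e^- - k}$, where $v,k,e^-$ are the number of vertices, the valency, and the smallest eigenvalue of the point graph (for order $(q,q^2-q)$ this size is $q^3-q^2+1$); equivalently, a set of points meeting every line in exactly one point. *)

From mathcomp Require Import all_boot all_fingroup.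
Set Implicit Arguments. Unset Strict Implicit. Unset Printing Implicit Defensive.

Definition is_GQ (P L : finType) (inc : P -> L -> bool) (s t : nat) : Prop :=
  [/\ forall p : P, #|[set l : L | inc p l]| = t.+1,
      forall l : L, #|[set p : P | inc p l]| = s.+1 &
      forall (p : P) (l : L), ~~ inc p l ->
        exists p' : P, exists l' : L,
          [/\ inc p' l, inc p l', inc p' l' &
              forall (p'' : P) (l'' : L), inc p'' l -> inc p l'' -> inc p'' l'' ->
                p'' = p' /\ l'' = l']].

Definition collinear (P L : finType) (inc : P -> L -> bool) (x y : P) : bool :=
  (x != y) && [exists l : L, inc x l && inc y l].

Definition is_automorphism (P L : finType) (inc : P -> L -> bool)
    (f : {perm P}) (g : {perm L}) : Prop :=
  forall (p : P) (l : L), inc (f p) (g l) = inc p l.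

Definition point_transitive (P L : finType) (inc : P -> L -> bool) : Prop :=
  forall x y : P, exists f : {perm P}, exists g : {perm L},
    is_automorphism inc f g /\ f x = y.

(* Ovoid of a GQ of order (s,t): a Delsarte coclique of the point graph.
   For GQ(s,t) the point graph has v = (s+1)(st+1), k = s(t+1), e^- = -(t+1),
   so the Delsarte size v e^-/(e^- - k) equals s*t+1
   (= q^3-q^2+1 for order (q,q^2-q)). *)
Definition is_ovoid (P L : finType) (inc : P -> L -> bool) (s t : nat)
    (O : {set P}) : Prop :=
  (forall x y : P, x \in O -> y \in O -> ~~ collinear inc x y) /\
  #|O| = s * t + 1.

From mathcomp Require Import all_boot all_fingroup zify.
Set Implicit Arguments. Unset Strict Implicit. Unset Printing Implicit Defensive.

(* Let O be an ovoid of a generalized quadrangle of order (s, t) with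
   t = s(s - 1), and x a point off O.  Every point off O is collinear with
   exactly t + 1 points of O.  For the points z off O and not collinear with
   x, let m(z) count the points of O collinear with both x and z; double
   counting fixes the first and second moments of m, and with t = s(s - 1)
   they force m to be constant, equal to s.  Consequently two distinct
   ovoids meet in exactly (s - 1)^2 points.  If the automorphism group is
   transitive on points, every point lies on the same number r of ovoids;
   counting incident pairs (point, ovoid) over all points, over the points
   of O, and over the t + 1 points collinear with two points a, b of O gives
   r = (s - 1)^2 + 1 and s * lambda = (s - 1)^2 + 1, where lambda is the
   number of ovoids through a and b.  Since (s - 1)^2 + 1 = 2 mod s, this
   forces s <= 2. *)

Lemma card_set_in_sum (T : finType) (A : {set T}) (p : pred T) :
  #|[set x in A | p x]| = \sum_(x in A) p x.
Proof.
by rewrite -sum1dep_card big_mkcondr /=; apply: eq_bigr => x _; case: (p x).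
Qed.

Section DoubleCounting.
Variables (T1 T2 : finType) (A : {set T1}) (B : {set T2}) (R : T1 -> T2 -> bool).

Lemma double_count :
  \sum_(a in A) #|[set b in B | R a b]| = \sum_(b in B) #|[set a in A | R a b]|.
Proof.
under eq_bigr do rewrite card_set_in_sum.
under [RHS]eq_bigr do rewrite card_set_in_sum.
exact: exchange_big.
Qed.

Lemma double_count_regular c1 c2 :
  {in A, forall a, #|[set b in B | R a b]| = c1} ->
  {in B, forall b, #|[set a in A | R a b]| = c2} ->
  #|A| * c1 = #|B| * c2.
Proof.
move=> regA regB; rewrite -!sum_nat_const -(eq_bigr _ regA) -(eq_bigr _ regB).
exact: double_count.
Qed.

Lemma double_count_sq :
  \sum_(b in B) #|[set a in A | R a b]| ^ 2 =
  \sum_(a in A) \sum_(a' in A) #|[set b in B | R a b && R a' b]|.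
Proof.
under eq_bigr => b _.
  rewrite expnS expn1 card_set_in_sum big_distrl /=.
  under eq_bigr => a _ do rewrite big_distrr /=.
  over.
rewrite exchange_big /=; apply: eq_bigr => a _.
rewrite exchange_big /=; apply: eq_bigr => a' _.
by rewrite card_set_in_sum; apply: eq_bigr => b _; rewrite mulnb.
Qed.

End DoubleCounting.

Section Quadrangle.
Variables (P L : finType) (inc : P -> L -> bool) (s t : nat).

Definition perp (x y : P) : bool := [exists l, inc x l && inc y l].

Definition perps (x : P) : {set P} := [set y | perp x y].

Lemma perp_sym : symmetric perp.
Proof. by move=> x y; apply/existsP/existsP => -[l /andP[? ?]]; exists l; apply/andP. Qed.

Lemma perp_of_inc x y l : inc x l -> inc y l -> perp x y.
Proof. by move=> xl yl; apply/existsP; exists l; rewrite xl yl. Qed.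

Lemma exists_off_line x y : ~~ perp x y -> forall l, exists z, ~~ inc z l.
Proof.
move=> xy l; have [xl|] := boolP (inc x l); last by exists x.
by exists y; apply: contra xy; apply: perp_of_inc.
Qed.

Definition coclique (O : {set P}) : bool :=
  [forall x in O, forall y in O, ~~ collinear inc x y].

Definition ovoid (O : {set P}) : bool := coclique O && (#|O| == (s * t).+1).

Definition ovoids : {set {set P}} := [set O | ovoid O].

Definition ovoids_through (x : P) : {set {set P}} :=
  [set O : {set P} in ovoids | x \in O].

Lemma cocliqueP (O : {set P}) :
  reflect {in O &, forall x y, perp x y -> x = y} (coclique O).
Proof.
apply: (iffP forall_inP) => [cO x y xO yO xy | cO x xO].
  by apply/eqP; apply: contraNT (forall_inP (cO x xO) y yO) => ne; apply/andP.
by apply/forall_inP => y yO; apply/negP => /andP[/eqP ne /(cO x y xO yO)].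
Qed.

Lemma ovoidP (O : {set P}) : reflect (is_ovoid inc s t O) (ovoid O).
Proof.
rewrite /is_ovoid addn1; apply: (iffP andP) => [[/forall_inP cO /eqP cardO] | [cO cardO]].
  by split=> // x y xO /(forall_inP (cO x xO)).
by split; [apply/forall_inP => x xO; apply/forall_inP => y; apply: cO | apply/eqP].
Qed.

Lemma ovoid_perp_eq (O : {set P}) : ovoid O -> {in O &, forall x y, perp x y -> x = y}.
Proof. by case/andP => /cocliqueP. Qed.

Lemma card_ovoid (O : {set P}) : ovoid O -> #|O| = (s * t).+1.
Proof. by case/andP => _ /eqP. Qed.

Lemma perp_perm f g : is_automorphism inc f g -> forall x y, perp (f x) (f y) = perp x y.
Proof.
move=> aut x y; apply/existsP/existsP => -[l /andP[xl yl]].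
  by exists (g^-1 l)%g; rewrite -(aut x) -(aut y) permKV xl yl.
by exists (g l); rewrite !aut xl yl.
Qed.

Lemma ovoid_image f g (O : {set P}) :
  is_automorphism inc f g -> ovoid O -> ovoid (f @: O).
Proof.
move=> aut ovO; rewrite /ovoid card_imset ?card_ovoid ?eqxx ?andbT //;
  last exact: perm_inj.
apply/cocliqueP => _ _ /imsetP[x xO ->] /imsetP[y yO ->].
by rewrite (perp_perm aut) => /(ovoid_perp_eq ovO xO yO) ->.
Qed.

Lemma card_ovoids_through_eq : point_transitive inc ->
  forall x y, #|ovoids_through x| = #|ovoids_through y|.
Proof.
move=> trans; suff le x y : #|ovoids_through x| <= #|ovoids_through y|.
  by move=> x y; apply/eqP; rewrite eqn_leq !le.
have [f [g [aut <-]]] := trans x y.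
rewrite -(card_imset _ (imset_inj (@perm_inj _ f))).
apply/subset_leq_card/subsetP => _ /imsetP[O + ->]; rewrite !inE => /andP[ovO xO].
by rewrite (ovoid_image aut) // imset_f.
Qed.

Lemma sum_card_ovoidsI x (A : {set P}) : point_transitive inc ->
  \sum_(O in ovoids) #|O :&: A| = #|A| * #|ovoids_through x|.
Proof.
move=> trans; rewrite -sum_nat_const.
rewrite (eq_bigr (fun O : {set P} => #|[set a in A | a \in O]|)) => [|O _]; last first.
  by apply: eq_card => a; rewrite !inE andbC.
rewrite (double_count _ _ (fun (O : {set P}) a => a \in O)); apply: eq_bigr => a _.
by rewrite -(card_ovoids_through_eq trans a); apply: eq_card => O; rewrite !inE.
Qed.

Lemma card_ovoids_avoiding2 a b :
  #|[set X in ovoids | (a \notin X) && (b \notin X)]| +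
    #|ovoids_through a| + #|ovoids_through b| =
  #|ovoids| + #|ovoids_through a :&: ovoids_through b|.
Proof.
have -> : [set X in ovoids | (a \notin X) && (b \notin X)] =
          ovoids :\: (ovoids_through a :|: ovoids_through b).
  by apply/setP => X; rewrite !inE; case: (ovoid X); rewrite ?andbF ?andbT //= negb_or.
rewrite -(cardsID (ovoids_through a :|: ovoids_through b) ovoids) (setIidPr _).
  by have := cardsUI (ovoids_through a) (ovoids_through b); lia.
by apply/subsetP => X; rewrite !inE => /orP[] /andP[].
Qed.

Section GQ.
Hypothesis deg_point : forall x : P, #|[set l : L | inc x l]| = t.+1.
Hypothesis deg_line : forall l : L, #|[set x : P | inc x l]| = s.+1.
Hypothesis gq_axiom : forall (p : P) (l : L), ~~ inc p l ->
  exists p' : P, exists l' : L,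
    [/\ inc p' l, inc p l', inc p' l' &
        forall (p'' : P) (l'' : L), inc p'' l -> inc p l'' -> inc p'' l'' ->
          p'' = p' /\ l'' = l'].
(* Not implied by the three axioms above: they hold vacuously when every
   point lies on every line. *)
Hypothesis line_proper : forall l : L, exists x : P, ~~ inc x l.

Lemma perpxx x : perp x x.
Proof.
have /card_gt0P[l] : 0 < #|[set l | inc x l]| by rewrite deg_point.
by rewrite inE => xl; apply: (perp_of_inc xl xl).
Qed.

Lemma projection_unique p m a la b lb : ~~ inc p m ->
  inc a m -> inc p la -> inc a la -> inc b m -> inc p lb -> inc b lb ->
  a = b /\ la = lb.
Proof.
move=> pm am pla ala bm plb blb; have [p' [l' [_ _ _ uniq]]] := gq_axiom pm.
by have [-> ->] := uniq a la am pla ala; have [-> ->] := uniq b lb bm plb blb.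
Qed.

Lemma lines_meet_once l1 l2 a b : l1 != l2 ->
  inc a l1 -> inc a l2 -> inc b l1 -> inc b l2 -> a = b.
Proof.
move=> l12 al1 al2 bl1 bl2; apply/eqP; apply: contraT => ab.
have [c cl1] := line_proper l1.
have [p' [l' [p'l1 cl' p'l' _]]] := gq_axiom cl1.
have [p'l2 | p'l2] := boolP (inc p' l2); last first.
  have [eq_ab _] := projection_unique p'l2 al2 p'l1 al1 bl2 p'l1 bl1.
  by rewrite eq_ab eqxx in ab.
have [w [wl1 wl2 wp']] : exists w, [/\ inc w l1, inc w l2 & w != p'].
  by have [ap'|] := eqVneq a p'; [exists b; rewrite bl1 bl2 -ap' eq_sym | exists a].
have wl' : ~~ inc w l'.
  apply: contra wp' => wl'.
  by have [-> _] := projection_unique cl1 wl1 cl' wl' p'l1 cl' p'l'.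
have [_ eq_l] := projection_unique wl' p'l' wl1 p'l1 p'l' wl2 p'l2.
by rewrite eq_l eqxx in l12.
Qed.

Lemma line_unique x y l1 l2 : x != y ->
  inc x l1 -> inc y l1 -> inc x l2 -> inc y l2 -> l1 = l2.
Proof.
move=> xy xl1 yl1 xl2 yl2; apply/eqP; apply: contraNT xy => l12.
by apply/eqP; apply: lines_meet_once l12 xl1 xl2 yl1 yl2.
Qed.

Lemma card_lines_through2 x y : x != y -> perp x y ->
  #|[set l | inc x l & inc y l]| = 1.
Proof.
move=> xy /existsP[l /andP[xl yl]]; apply: (@eq_card1 _ l) => l'; rewrite !inE.
apply/andP/eqP => [[xl' yl'] | ->]; last by rewrite xl yl.
exact: line_unique xy xl' yl' xl yl.
Qed.

Lemma inc_of_perp2 a b c l : a != b -> inc a l -> inc b l ->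
  perp c a -> perp c b -> inc c l.
Proof.
move=> ab al bl /existsP[la /andP[cla ala]] /existsP[lb /andP[clb blb]].
apply: contraT => cl; have [eq_ab _] := projection_unique cl al cla ala bl clb blb.
by rewrite eq_ab eqxx in ab.
Qed.

Lemma card_projection p m : ~~ inc p m -> #|[set a | inc a m & perp p a]| = 1.
Proof.
move=> pm; have [p' [l' [p'm pl' p'l' uniq]]] := gq_axiom pm.
apply: (@eq_card1 _ p') => a; rewrite !inE; apply/andP/eqP => [[am] | ->].
  by case/existsP => la /andP[pla ala]; have [] := uniq a la am pla ala.
by rewrite p'm (perp_of_inc pl' p'l').
Qed.

Lemma card_perpsD1 x : #|perps x :\ x| = s * t.+1.
Proof.
have := @double_count_regular _ _ (perps x :\ x) [set l | inc x l]
  (fun y l => inc y l) 1 s.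
rewrite deg_point muln1 mulnC; apply.
  move=> y; rewrite !inE => /andP[yx xy].
  rewrite -(@card_lines_through2 x y) 1?eq_sym //.
  by apply: eq_card => l; rewrite !inE.
move=> l; rewrite inE => xl; rewrite (_ : [set y in _ | _] = [set y | inc y l] :\ x).
  by have := cardsD1 x [set y | inc y l]; rewrite deg_line inE xl add1n => -[].
apply/setP => y; rewrite !inE -andbA.
by case: (boolP (inc y l)) => yl; rewrite ?andbF // (perp_of_inc xl yl).
Qed.

Lemma card_perpsI x y : ~~ perp x y -> #|perps x :&: perps y| = t.+1.
Proof.
move=> xy.
have := @double_count_regular _ _ (perps x :&: perps y) [set l | inc x l]
  (fun z l => inc z l) 1 1.
rewrite deg_point !muln1; apply.
  move=> z; rewrite !inE => /andP[xz yz].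
  have zx : x != z by apply: contraNneq xy => ->; rewrite perp_sym.
  by rewrite -(card_lines_through2 zx xz); apply: eq_card => l; rewrite !inE.
move=> l; rewrite inE => xl.
have yl : ~~ inc y l by apply: contra xy => yl; rewrite perp_sym (perp_of_inc yl xl).
rewrite -(card_projection yl); apply: eq_card => z; rewrite !inE.
by case: (boolP (inc z l)) => zl; rewrite ?andbF ?andbT // (perp_of_inc xl zl).
Qed.

Lemma card_perpsC_perps x z : z \in perps x :\ x -> #|~: perps x :&: perps z| = s * t.
Proof.
rewrite !inE => /andP[zx /existsP[l0 /andP[xl0 zl0]]].
have := @double_count_regular _ _ (~: perps x :&: perps z) ([set l | inc z l] :\ l0)
  (fun y l => inc y l) 1 s.
have -> : #|[set l | inc z l] :\ l0| = t.
  by have := cardsD1 l0 [set l | inc z l]; rewrite deg_point inE zl0 add1n => -[].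
rewrite muln1 mulnC; apply.
  move=> y; rewrite !inE => /andP[xy /existsP[l /andP[zl yl]]].
  have yz : z != y by apply: contraNneq xy => <-; apply: perp_of_inc xl0 zl0.
  rewrite -(card_lines_through2 yz (perp_of_inc zl yl)); apply: eq_card => l'.
  rewrite !inE -andbA.
  case: (boolP (inc z l')) => zl'; case: (boolP (inc y l')) => yl';
    rewrite ?andbF ?andbT //.
  by apply: contra xy => /eqP eq_l; apply: perp_of_inc _ yl'; rewrite eq_l.
move=> l; rewrite !inE => /andP[ll0 zl].
have xl : ~~ inc x l.
  by apply: contra ll0 => xl; apply/eqP; apply: line_unique zx zl xl zl0 xl0.
rewrite (_ : [set y in _ | _] = [set y | inc y l] :\ z).
  by have := cardsD1 z [set y | inc y l]; rewrite deg_line inE zl add1n => -[].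
apply/setP => y; rewrite !inE.
case: (boolP (inc y l)) => yl; rewrite ?andbF ?andbT // (perp_of_inc zl yl) andbT.
apply/idP/idP => [xy | yz].
  by apply: contraNneq xy => ->; rewrite perp_sym (perp_of_inc zl0 xl0).
have /card_le1_eqP proj_uniq : #|[set a | inc a l & perp x a]| <= 1.
  by rewrite card_projection.
apply: contra yz => xy; apply/eqP/proj_uniq; rewrite inE ?yl ?zl //.
by rewrite perp_sym (perp_of_inc zl0 xl0).
Qed.

Lemma card_perpsC x : #|~: perps x| = s * s * t.
Proof.
apply/eqP; rewrite -(eqn_pmul2r (ltn0Sn t)); apply/eqP.
rewrite (@double_count_regular _ _ (~: perps x) (perps x :\ x) perp t.+1 (s * t)).
- by rewrite card_perpsD1; lia.
- move=> y; rewrite !inE => xy; rewrite -(card_perpsI xy); apply: eq_card => z.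
  rewrite !inE -andbA; have [->|//] := eqVneq z x.
  by rewrite [perp y x]perp_sym (negPf xy) andbF.
- move=> z zx; rewrite -(card_perpsC_perps zx); apply: eq_card => y.
  by rewrite !inE [perp y z]perp_sym.
Qed.

Lemma card_points (x : P) : #|[set: P]| = s.+1 * (s * t).+1.
Proof.
rewrite cardsT -(cardsC (perps x)) card_perpsC (cardsD1 x) card_perpsD1 inE perpxx.
by lia.
Qed.

Lemma card_coclique_perps_le O y : coclique O -> y \notin O ->
  #|O :&: perps y| <= t.+1.
Proof.
move=> /cocliqueP cO yO.
have one_line :
    {in O :&: perps y, forall o, #|[set l in [set l | inc y l] | inc o l]| = 1}.
  move=> o; rewrite !inE => /andP[oO yo]; have oy : y != o by apply: contraNneq yO => ->.
  by rewrite -(card_lines_through2 oy yo); apply: eq_card => l; rewrite !inE.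
have := double_count (O :&: perps y) [set l | inc y l] (fun o l => inc o l).
rewrite (eq_bigr _ one_line) sum_nat_const muln1 => ->.
rewrite -(deg_point y) -sum1_card; apply: leq_sum => l; rewrite inE => yl.
apply/card_le1_eqP => a b; rewrite !inE => /andP[/andP[aO _] al] /andP[/andP[bO _] bl].
exact: cO bO aO (perp_of_inc bl al).
Qed.

Lemma card_ovoid_perps O y : ovoid O -> y \notin O -> #|O :&: perps y| = t.+1.
Proof.
move=> ovO yO; have /andP[cO _] := ovO.
have le_deg z : z \in ~: O -> #|O :&: perps z| <= t.+1 ?= iff (#|O :&: perps z| == t.+1).
  by rewrite inE => zO; apply/leqif_eq/card_coclique_perps_le.
suff /forall_inP/(_ y) : [forall (z | z \in ~: O), #|O :&: perps z| == t.+1].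
  by rewrite inE => /(_ yO)/eqP.
rewrite -(leqif_sum le_deg) sum_nat_const.
have -> : \sum_(z in ~: O) #|O :&: perps z| = #|O| * (s * t.+1).
  rewrite -sum_nat_const (eq_bigr (fun z => #|[set o in O | perp z o]|)) => [|z _];
    last first.
    by apply: eq_card => o; rewrite !inE.
  rewrite (double_count _ _ perp); apply: eq_bigr => o oO.
  rewrite -(card_perpsD1 o); apply: eq_card => z; rewrite !inE perp_sym.
  case: (boolP (perp o z)) => oz; rewrite ?andbF ?andbT //.
  apply/idP/idP => [zO | zo]; first by apply: contraNneq zO => ->.
  by apply: contra zo => zO; apply/eqP/(ovoid_perp_eq ovO zO oO); rewrite perp_sym.
rewrite card_ovoid // cardsCs setCK -cardsT (card_points y) card_ovoid //.
by apply/eqP; rewrite [s.+1 * _]mulSn addKn; lia.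
Qed.

Lemma card_ovoids_transitive x : point_transitive inc ->
  #|ovoids| = s.+1 * #|ovoids_through x|.
Proof.
move=> trans; apply/eqP; rewrite -(eqn_pmul2r (ltn0Sn (s * t))) mulnAC -(card_points x).
rewrite -(sum_card_ovoidsI x _ trans) -sum_nat_const; apply/eqP/eq_bigr => X.
by rewrite inE setIT => /card_ovoid.
Qed.

Section FarPoints.
Variables (O : {set P}) (x : P).
Hypotheses (ovO : ovoid O) (xO : x \notin O).

Let far := ~: perps x :\: O.

Lemma card_far : #|far| + s * t = s * s * t + t.
Proof.
have := cardsID O (~: perps x); rewrite card_perpsC -/far.
have := cardsID (perps x) O; rewrite card_ovoid_perps // (card_ovoid ovO) setDE setIC.
by lia.
Qed.

Lemma card_far_perps o : o \in O :&: perps x -> #|far :&: perps o| = s * t.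
Proof.
rewrite !inE => /andP[oO xo].
have ox : o \in perps x :\ x by rewrite !inE xo andbT; apply: contraNneq xO => <-.
rewrite -(card_perpsC_perps ox); apply: eq_card => y; rewrite !inE.
case: (boolP (perp o y)) => oy; rewrite ?andbF ?andbT //.
case: (boolP (perp x y)) => xy; rewrite ?andbF ?andbT //; apply: contra xy => yO.
by rewrite -(ovoid_perp_eq ovO oO yO oy).
Qed.

Lemma card_far_perps2 o o' : o \in O :&: perps x -> o' \in O :&: perps x -> o != o' ->
  #|far :&: perps o :&: perps o'| = t.
Proof.
rewrite !inE => /andP[oO xo] /andP[o'O xo'] oo'.
have noo' : ~~ perp o o' by apply: contra oo' => /(ovoid_perp_eq ovO oO o'O) ->.
have := cardsD1 x (perps o :&: perps o'); rewrite card_perpsI // !inE.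
rewrite ![perp _ x]perp_sym xo xo' add1n => -[->]; apply: eq_card => y; rewrite !inE.
case: (boolP (perp o y)) => oy; case: (boolP (perp o' y)) => o'y;
  rewrite ?andbF ?andbT //.
have yO : y \notin O.
  by apply: contra noo' => yO; rewrite (ovoid_perp_eq ovO oO yO oy) perp_sym.
rewrite yO /=; apply/idP/idP => [xy | yx].
  by apply: contraNneq xy => ->; apply: perpxx.
apply: contra noo' => /existsP[l /andP[xl yl]].
have xy : x != y by rewrite eq_sym.
by apply: (perp_of_inc (inc_of_perp2 xy xl yl _ oy) (inc_of_perp2 xy xl yl _ o'y));
  rewrite perp_sym.
Qed.

Let card_setI_perpsE y : #|O :&: perps x :&: perps y| = #|[set o in O :&: perps x | perp o y]|.
Proof. by apply: eq_card => o; rewrite !inE [perp y o]perp_sym. Qed.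

Lemma sum_far_meet : \sum_(y in far) #|O :&: perps x :&: perps y| = t.+1 * (s * t).
Proof.
under eq_bigr do rewrite card_setI_perpsE.
rewrite -(double_count (O :&: perps x) far perp) -(card_ovoid_perps ovO xO).
rewrite -sum_nat_const.
apply: eq_bigr => o ox; rewrite -(card_far_perps ox).
by apply: eq_card => y; rewrite !inE.
Qed.

Lemma sum_far_meet_sq :
  \sum_(y in far) #|O :&: perps x :&: perps y| ^ 2 = t.+1 * (s * t + t * t).
Proof.
under eq_bigr do rewrite card_setI_perpsE.
rewrite double_count_sq -(card_ovoid_perps ovO xO) -sum_nat_const.
apply: eq_bigr => o ox; rewrite (big_setD1 o ox) /=.
have -> : #|[set y in far | perp o y && perp o y]| = s * t.
  by rewrite -(card_far_perps ox); apply: eq_card => y; rewrite !inE andbb.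
rewrite (eq_bigr (fun=> t)) => [|o']; last first.
  rewrite in_setD1 => /andP[o'o o'x]; rewrite -(card_far_perps2 ox o'x) 1?eq_sym //.
  by apply: eq_card => y; rewrite !inE andbA.
have := cardsD1 o (O :&: perps x).
by rewrite ox add1n card_ovoid_perps // sum_nat_const => -[<-].
Qed.

End FarPoints.

Section OrderQQ2Q.
Variable p : nat.
Hypotheses (s_eq : s = p.+1) (t_eq : t = p.+1 * p).

Lemma card_ovoid_perps2 O x y : ovoid O -> x \notin O -> y \notin O -> ~~ perp x y ->
  #|O :&: perps x :&: perps y| = s.
Proof.
move=> ovO xO yO xy; have far_y : y \in ~: perps x :\: O by rewrite !inE yO xy.
suff /forall_inP/(_ y far_y)/eqP :
    [forall (z | z \in ~: perps x :\: O), #|O :&: perps x :&: perps z| == s] by [].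
(* Equality case of 2 m s <= m ^ 2 + s ^ 2, summed over the far points. *)
rewrite -(leqif_sum (fun z _ => nat_Cauchy #|O :&: perps x :&: perps z| s)).
apply/eqP; rewrite [in RHS]big_split sum_nat_const -big_distrr -big_distrl /=.
rewrite (sum_far_meet ovO xO) (sum_far_meet_sq ovO xO).
have := card_far ovO xO; rewrite s_eq t_eq => card_far_eq.
by nia.
Qed.

Lemma card_ovoidI O O' : ovoid O -> ovoid O' -> O != O' -> #|O :&: O'| = p ^ 2.
Proof.
move=> ovO ovO' OO'.
have /subsetPn[x xO' xO] : ~~ (O' \subset O).
  apply: contra OO' => sub.
  by rewrite eq_sym eqEcard sub (card_ovoid ovO) (card_ovoid ovO') leqnn.
have o_side : {in O :&: perps x, forall o, #|[set b in O' :\ x | perp o b]| = t}.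
  move=> o; rewrite !inE => /andP[oO xo].
  have oO' : o \notin O'.
    by apply: contra xO => oO'; rewrite (ovoid_perp_eq ovO' xO' oO' xo).
  have := cardsD1 x (O' :&: perps o); rewrite card_ovoid_perps // !inE xO' perp_sym xo.
  by rewrite add1n => -[->]; apply: eq_card => b; rewrite !inE andbA.
have b_side :
    {in O' :\ x, forall b, #|[set o in O :&: perps x | perp o b]| = s * (b \notin O)}.
  move=> b; rewrite !inE => /andP[bx bO'].
  have xb : ~~ perp x b by apply: contra bx => /(ovoid_perp_eq ovO' xO' bO') ->.
  have [bO | bO] := boolP (b \in O); rewrite /= ?muln0 ?muln1.
    apply: eq_card0 => o; rewrite !inE; apply/negP => /andP[/andP[oO xo] ob].
    by move: xb; rewrite -(ovoid_perp_eq ovO oO bO ob) xo.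
  rewrite -(card_ovoid_perps2 ovO xO bO xb); apply: eq_card => o.
  by rewrite !inE [perp b o]perp_sym.
have := double_count (O :&: perps x) (O' :\ x) perp.
rewrite (eq_bigr _ o_side) (eq_bigr _ b_side) sum_nat_const -big_distrr -card_set_in_sum.
have -> : #|[set y in O' :\ x | y \notin O]| = #|O' :\ x :\: O|.
  by apply: eq_card => y; rewrite !inE andbC.
rewrite card_ovoid_perps //.
have := cardsID O (O' :\ x); rewrite (_ : (O' :\ x) :&: O = O :&: O'); last first.
  apply/setP => y; rewrite !inE andbC andbA; case: (boolP (y \in O)) => //= yO.
  by apply/andb_idl => _; apply: contraNneq xO => <-.
have := cardsD1 x O'; rewrite xO' (card_ovoid ovO') add1n => -[<-] /=.
rewrite s_eq t_eq; nia.
Qed.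

Lemma sum_card_ovoidsI_ovoid O : ovoid O ->
  \sum_(X in ovoids) #|X :&: O| = (s * t).+1 + #|ovoids :\ O| * p ^ 2.
Proof.
move=> ovO; have Oovoid : O \in ovoids by rewrite inE.
rewrite (big_setD1 O Oovoid) setIid (card_ovoid ovO) (eq_bigr (fun=> p ^ 2)) => [|X].
  by rewrite sum_nat_const.
by rewrite !inE => /andP[XO ovX]; rewrite setIC card_ovoidI // eq_sym.
Qed.

Lemma sum_card_ovoidsI_perps2 a b : ~~ perp a b ->
  \sum_(X in ovoids) #|X :&: (perps a :&: perps b)| =
  s * #|[set X in ovoids | (a \notin X) && (b \notin X)]|.
Proof.
move=> ab; rewrite card_set_in_sum big_distrr; apply: eq_bigr => X; rewrite inE => ovX.
have [aX | aX] /= := boolP (a \in X).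
  rewrite muln0; apply: eq_card0 => z; rewrite !inE; apply/negP => /and3P[zX az bz].
  by move: ab; rewrite (ovoid_perp_eq ovX aX zX az) perp_sym bz.
have [bX | bX] /= := boolP (b \in X).
  rewrite muln0; apply: eq_card0 => z; rewrite !inE; apply/negP => /and3P[zX az bz].
  by move: ab; rewrite (ovoid_perp_eq ovX bX zX bz) az.
by rewrite muln1 setIA card_ovoid_perps2.
Qed.

Lemma ovoid_point_transitive_le1 O : point_transitive inc -> ovoid O -> p <= 1.
Proof.
move=> trans ovO; rewrite leqNgt; apply/negP => p_gt1.
have [a [b [aO bO ab]]] : exists a b, [/\ a \in O, b \in O & a != b].
  by apply/card_gt1P; rewrite (card_ovoid ovO) s_eq t_eq; nia.
have nab : ~~ perp a b by apply: contra ab => /(ovoid_perp_eq ovO aO bO) ->.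
set r := #|ovoids_through a|.
have through_r y : #|ovoids_through y| = r := card_ovoids_through_eq trans y a.
have r_eq : r = p ^ 2 + 1.
  have := sum_card_ovoidsI a O trans; rewrite sum_card_ovoidsI_ovoid // card_ovoid // -/r.
  have : #|ovoids :\ O| * p ^ 2 + p ^ 2 = s.+1 * r * p ^ 2.
    by rewrite -mulSnr -(card_ovoids_transitive a trans) (cardsD1 O ovoids) inE ovO.
  rewrite s_eq t_eq -mulnn => ovoidsD1 count.
  by apply/eqP; rewrite -(eqn_pmul2r (ltn0Sn p)); apply/eqP; lia.
have lam_eq : s * #|ovoids_through a :&: ovoids_through b| = p ^ 2 + 1.
  have := sum_card_ovoidsI a (perps a :&: perps b) trans.
  rewrite sum_card_ovoidsI_perps2 // card_perpsI //.
  have := card_ovoids_avoiding2 a b; rewrite (card_ovoids_transitive a trans) !through_r.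
  by rewrite r_eq s_eq t_eq -mulnn; lia.
rewrite s_eq -mulnn in lam_eq.
by have [|] := ltnP #|ovoids_through a :&: ovoids_through b| p; nia.
Qed.

End OrderQQ2Q.

End GQ.

End Quadrangle.

Theorem lemma5p3 (q : nat) (P L : finType) (inc : P -> L -> bool) :
  2 < q ->
  is_GQ inc q (q ^ 2 - q) ->
  point_transitive inc ->
  ~ (exists O : {set P}, is_ovoid inc q (q ^ 2 - q) O).
Proof.
move=> q_gt2 [deg_point deg_line gq_axiom] trans [O /ovoidP ovO].
have [x [y [xO yO xy]]] : exists x y, [/\ x \in O, y \in O & x != y].
  by apply/card_gt1P; rewrite (card_ovoid ovO); nia.
have nxy : ~~ perp inc x y by apply: contra xy => /(ovoid_perp_eq ovO xO yO) ->.
have q_eq : q = q.-1.+1 by lia.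
have order_eq : q ^ 2 - q = q.-1.+1 * q.-1 by rewrite -q_eq -mulnn -subn1 mulnBr muln1.
have := ovoid_point_transitive_le1 deg_point deg_line gq_axiom (exists_off_line nxy)
  q_eq order_eq trans ovO.
by lia.
Qed.
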